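(* Let $s,y\in\mathbb{R}^n$ with $s^Ty>0$, let $\tau\in[0,1]$, and for $\alpha>0$ define $$\phi_\tau(\alpha)=\Big\|\tau\Big(\tfrac{1}{\alpha}s-y\Big)+(1-\tau)(s-\alpha y)\Big\|^2 .$$ Let $\alpha^{BB1}=\dfrac{s^Ts}{s^Ty}$ and $\alpha^{BB2}=\dfrac{s^Ty}{y^Ty}$. Then the equation $\phi_\tau'(\alpha)=0$ has a unique root in the interval $[\alpha^{BB2},\alpha^{BB1}]$.
   Context: $\|\cdot\|$ denotes the Euclidean norm and $\phi_\tau'$ the derivative of $\phi_\tau$ with respect to $\alpha$. (Note $s^Ty>0$ forces $y\neq 0$, and by Cauchy–Schwarz $\alpha^{BB2}\le\alpha^{BB1}$.) *)

From mathcomp Require Import all_boot all_order all_algebra.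
From mathcomp Require Import all_classical all_reals all_analysis.
Set Implicit Arguments. Unset Strict Implicit. Unset Printing Implicit Defensive.
Import Order.TTheory GRing.Theory Num.Theory.
Local Open Scope ring_scope.

Definition dotv (R : realType) (n : nat) (u v : 'rV[R]_n) : R :=
  \sum_(i < n) u 0 i * v 0 i.

Definition sqnorm (R : realType) (n : nat) (v : 'rV[R]_n) : R := dotv v v.

Definition phi (R : realType) (n : nat) (tau : R) (s y : 'rV[R]_n) (alpha : R) : R :=
  sqnorm (tau *: (alpha^-1 *: s - y) + (1 - tau) *: (s - alpha *: y)).

Definition alphaBB1 (R : realType) (n : nat) (s y : 'rV[R]_n) : R := dotv s s / dotv s y.
Definition alphaBB2 (R : realType) (n : nat) (s y : 'rV[R]_n) : R := dotv s y / dotv y y.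

From mathcomp Require Import all_boot all_order all_algebra.
From mathcomp Require Import all_classical all_reals all_analysis.
From mathcomp Require Import ring lra.
Import Order.TTheory GRing.Theory Num.Theory.
Import numFieldNormedType.Exports.
Set Implicit Arguments. Unset Strict Implicit. Unset Printing Implicit Defensive.
Local Open Scope ring_scope.

(* With a = s's, b = s'y and c = y'y, phi_tau is the binary quadratic form of
   the Gram matrix of (s, y) evaluated at (tau/alpha + 1 - tau, tau + (1 - tau) alpha),
   and phi_tau'(alpha) = 2 (tau + (1 - tau) alpha) / alpha^3 * P(alpha) for the
   cubic P(alpha) = (1 - tau) alpha^2 (c alpha - b) + tau (b alpha - a).
   Cauchy-Schwarz (b^2 <= a c) gives P(b/c) <= 0 <= P(a/b), so the intermediate
   value theorem yields a root in [alphaBB2, alphaBB1]; and P is strictly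
   increasing on [b/c, +oo), so that root is the only one. *)

Definition qform (R : pzRingType) (a b c p q : R) : R :=
  p ^+ 2 * a - 2 * (p * q) * b + q ^+ 2 * c.

Lemma qform_psd_sqr_le (R : realFieldType) (a b c : R) :
  (forall p q, 0 <= qform a b c p q) -> b ^+ 2 <= a * c.
Proof.
rewrite /qform => psd.
have a_ge0 : 0 <= a by have := psd 1 0; rewrite expr1n mul1r; lra.
have [c_gt0|c_le0] := ltrP 0 c; first by have := psd c b; nra.
have c0 : c = 0 by have := psd 0 1; rewrite expr1n mul1r; lra.
by have := psd b (a + 1); rewrite c0; nra.
Qed.

Lemma is_derive_qform (R : realType) (f g : R -> R) (x df dg a b c : R) :
  is_derive x 1 f df -> is_derive x 1 g dg ->
  is_derive x 1 (fun t => qform a b c (f t) (g t))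
    (2 * (f x * df * a - (df * g x + f x * dg) * b + g x * dg * c)).
Proof.
move=> Df Dg.
have D := is_deriveD
  (is_deriveB (is_deriveM (is_deriveX 2 Df) (is_derive_cst a x 1))
     (is_deriveM (is_deriveM (is_derive_cst (2 : R) x 1) (is_deriveM Df Dg))
        (is_derive_cst b x 1)))
  (is_deriveM (is_deriveX 2 Dg) (is_derive_cst c x 1)).
by apply: (is_derive_eq D); rewrite /cst /GRing.scale /=; ring.
Qed.

Section DotProduct.
Variables (R : realType) (n : nat).
Implicit Types s y : 'rV[R]_n.

Lemma sqnorm_ge0 (v : 'rV[R]_n) : 0 <= sqnorm v.
Proof. by apply: sumr_ge0 => i _; rewrite -expr2 sqr_ge0. Qed.

Lemma sqnorm_scaleB s y p q :
  sqnorm (p *: s - q *: y) = qform (sqnorm s) (dotv s y) (sqnorm y) p q.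
Proof.
rewrite /sqnorm /qform /dotv !mulr_sumr -sumrB -big_split /=.
by apply: eq_bigr => i _; rewrite !mxE; ring.
Qed.

Lemma dotv_sqr_le s y : dotv s y ^+ 2 <= sqnorm s * sqnorm y.
Proof. by apply: qform_psd_sqr_le => p q; rewrite -sqnorm_scaleB sqnorm_ge0. Qed.

Lemma dotv_gt0_sqnorm_gt0 s y : 0 < dotv s y -> 0 < sqnorm s /\ 0 < sqnorm y.
Proof.
move=> b_gt0; have := dotv_sqr_le s y.
have := sqnorm_ge0 s; have := sqnorm_ge0 y.
have := exprn_gt0 2 b_gt0.
move: (sqnorm s) (sqnorm y) (dotv s y) => a c b.
by move=> *; split; nra.
Qed.

End DotProduct.

Definition bb_cubic (R : nzRingType) (tau a b c : R) : {poly R} :=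
  ((1 - tau) * c)%:P * 'X^3 - ((1 - tau) * b)%:P * 'X^2 + (tau * b)%:P * 'X
  - (tau * a)%:P.

Section BBCubic.
Variables (R : realFieldType) (tau a b c : R).
Hypotheses (tau_ge0 : 0 <= tau) (tau_le1 : tau <= 1) (b_gt0 : 0 < b) (c_gt0 : 0 < c).
Hypothesis sqr_le : b ^+ 2 <= a * c.

Lemma horner_bb_cubic x :
  (bb_cubic tau a b c).[x] = (1 - tau) * x ^+ 2 * (x * c - b) + tau * (x * b - a).
Proof.
rewrite /bb_cubic !hornerD !hornerN !hornerCM !hornerXn hornerX hornerC; ring.
Qed.

Lemma bb_cubic_le0_at_lower : (bb_cubic tau a b c).[b / c] <= 0.
Proof.
rewrite horner_bb_cubic divfK ?gt_eqF // subrr mulr0 add0r.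
by rewrite mulr_ge0_le0 // subr_le0 mulrAC ler_pdivrMr // -expr2.
Qed.

Lemma bb_cubic_ge0_at_upper : 0 <= (bb_cubic tau a b c).[a / b].
Proof.
rewrite horner_bb_cubic divfK ?gt_eqF // subrr mulr0 addr0.
apply: mulr_ge0; first by rewrite mulr_ge0 ?subr_ge0 ?sqr_ge0.
by rewrite subr_ge0 mulrAC ler_pdivlMr // -expr2.
Qed.

Lemma bb_cubic_homo_lt :
  {in `[b / c, +oo[ &, {homo horner (bb_cubic tau a b c) : x z / x < z}}.
Proof.
move=> x z; rewrite !in_itv /= !andbT !ler_pdivrMr // => cx cz lt_xz.
rewrite -subr_gt0.
have -> : (bb_cubic tau a b c).[z] - (bb_cubic tau a b c).[x] =
    (z - x) * ((1 - tau) * ((z * c - b) * z + (x * c - b) * x + x * z * c) + tau * b).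
  by rewrite !horner_bb_cubic; ring.
rewrite mulr_gt0 ?subr_gt0 //.
have x_gt0 : 0 < x by rewrite -(pmulr_lgt0 _ c_gt0) (lt_le_trans b_gt0).
have z_gt0 : 0 < z by rewrite (lt_trans x_gt0).
have P_gt0 : 0 < (z * c - b) * z + (x * c - b) * x + x * z * c.
  apply: ltr_wpDl; last by rewrite !mulr_gt0.
  by rewrite addr_ge0 // mulr_ge0 ?subr_ge0 // ltW.
have [tau_lt1|tau_ge1] := ltrP tau 1.
  have := mulr_ge0 tau_ge0 (ltW b_gt0).
  have : 0 < 1 - tau by rewrite subr_gt0.
  move/mulr_gt0/(_ P_gt0); lra.
by rewrite (@le_anti _ _ tau 1) ?tau_le1 // subrr mul0r add0r mul1r.
Qed.

Lemma bb_cubic_inj :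
  {in `[b / c, +oo[ &, injective (horner (bb_cubic tau a b c))}.
Proof. exact/inc_inj_in/le_mono_in/bb_cubic_homo_lt. Qed.
End BBCubic.

Lemma bb_cubic_has_root (R : realType) (tau a b c : R) :
  0 <= tau <= 1 -> 0 < b -> 0 < c -> b ^+ 2 <= a * c ->
  exists2 al, b / c <= al <= a / b & (bb_cubic tau a b c).[al] = 0.
Proof.
move=> /andP[tau_ge0 tau_le1] b_gt0 c_gt0 sqr_le.
have lower_le_upper : b / c <= a / b.
  by rewrite ler_pdivrMr // mulrAC ler_pdivlMr // -expr2.
have P_cont : continuous (horner (bb_cubic tau a b c)).
  by move=> ?; exact: continuous_horner.
have [|al] := @IVT R _ _ _ 0 lower_le_upper (continuous_subspaceT P_cont).
  by rewrite ge_min bb_cubic_le0_at_lower // le_max bb_cubic_ge0_at_upper // orbT.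
by rewrite in_itv /=; exists al.
Qed.

Section Phi.
Variables (R : realType) (n : nat) (tau : R) (s y : 'rV[R]_n).
Local Notation a := (sqnorm s).
Local Notation b := (dotv s y).
Local Notation c := (sqnorm y).

Lemma phi_qform :
  phi tau s y = fun al => qform a b c (tau / al + (1 - tau)) (tau + (1 - tau) * al).
Proof.
apply/funext => al; rewrite /phi -sqnorm_scaleB; congr sqnorm.
by apply/rowP => i; rewrite !mxE; ring.
Qed.

Lemma derive1_phi al : al != 0 ->
  derive1 (phi tau s y) al =
  2 * (tau + (1 - tau) * al) / al ^+ 3 * (bb_cubic tau a b c).[al].
Proof.
move=> al_neq0; rewrite phi_qform derive1E.
have Dp : is_derive al 1 (fun t => tau / t + (1 - tau)) (- tau / al ^+ 2).
  apply: (is_derive_eq (is_deriveD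
    (is_deriveZ tau (is_deriveV al_neq0 (is_derive_id al 1)))
    (is_derive_cst (1 - tau) al 1))).
  by rewrite /GRing.scale /=; field.
have Dq : is_derive al 1 (fun t => tau + (1 - tau) * t) (1 - tau).
  apply: (is_derive_eq (is_deriveD (is_derive_cst tau al 1)
    (is_deriveZ (1 - tau) (is_derive_id al 1)))).
  by rewrite /GRing.scale /=; ring.
rewrite (@derive_val _ _ _ _ _ _ _ (is_derive_qform a b c Dp Dq)) horner_bb_cubic.
by field.
Qed.

Lemma derive1_phi_eq0 al : 0 <= tau <= 1 -> 0 < al ->
  derive1 (phi tau s y) al = 0 <-> (bb_cubic tau a b c).[al] = 0.
Proof.
move=> /andP[tau_ge0 tau_le1] al_gt0.
rewrite derive1_phi ?gt_eqF //.
have q_gt0 : 0 < tau + (1 - tau) * al by nra.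
have factor_gt0 : 0 < 2 * (tau + (1 - tau) * al) / al ^+ 3.
  by rewrite divr_gt0 ?exprn_gt0 ?mulr_gt0.
by split=> [/eqP|->]; rewrite ?mulr0 // mulf_eq0 gt_eqF // => /eqP.
Qed.

End Phi.

Theorem proposition1 (R : realType) (n : nat) (s y : 'rV[R]_n) (tau : R) :
  0 < dotv s y -> 0 <= tau <= 1 ->
  exists! alpha : R,
    alphaBB2 s y <= alpha <= alphaBB1 s y /\ derive1 (phi tau s y) alpha = 0.
Proof.
move=> b_gt0 tau01; have [tau_ge0 tau_le1] := andP tau01.
have [a_gt0 c_gt0] := dotv_gt0_sqnorm_gt0 b_gt0.
have [al al_in root_al] := bb_cubic_has_root tau01 b_gt0 c_gt0 (dotv_sqr_le s y).
have BB_gt0 z : alphaBB2 s y <= z <= alphaBB1 s y -> 0 < z.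
  by case/andP=> /(lt_le_trans (divr_gt0 b_gt0 c_gt0)).
exists al; split; first by split; last by apply/derive1_phi_eq0; rewrite ?BB_gt0.
move=> z [z_in /(derive1_phi_eq0 s y tau01 (BB_gt0 z z_in)) root_z].
apply: (bb_cubic_inj (a := sqnorm s) tau_ge0 tau_le1 b_gt0 c_gt0).
- by rewrite in_itv /= andbT; case/andP: al_in.
- by rewrite in_itv /= andbT; case/andP: z_in.
by rewrite root_al root_z.
Qed.
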